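(* Let $a=(a_j)_{j\in\mathbb Z}\subset\mathbb R$ be such that $$\lim_{k\to\infty}\frac1k\sum_{j=0}^{k-1}a_j=\lim_{k\to\infty}\frac1k\sum_{j=-1}^{-k}a_j=\bar a.$$ For $n\in\mathbb N$ let $p^{(n)}=(p^{(n)}_j)_{j\in\mathbb Z}$ be the density of a probability distribution on $\mathbb Z$, with expectation denoted $\mathcal E_n$, such that (i) $j\mapsto p^{(n)}_j$ is increasing on $\mathbb Z^-$ and decreasing on $\mathbb Z_0^+$; (ii) for all $r\in\mathbb N$, $\mathcal E_n(1_{[-r,r]})=\sum_{j=-r}^rp^{(n)}_j\to0$ as $n\to\infty$. Then $$\lim_{n\to\infty}\mathcal E_n(a)=\lim_{n\to\infty}\sum_{j\in\mathbb Z}p^{(n)}_ja_j=\bar a.$$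
   Context: $\mathbb Z^-$ denotes the negative integers and $\mathbb Z_0^+$ the non-negative integers; monotonicity in (i) is in the weak sense. *)

From HB Require Import structures.
From mathcomp Require Import all_boot all_order all_algebra.
From mathcomp Require Import all_classical all_reals topology normedtype sequences.
Set Implicit Arguments. Unset Strict Implicit. Unset Printing Implicit Defensive.
Import Order.TTheory GRing.Theory Num.Theory.
Import numFieldNormedType.Exports.
Local Open Scope classical_set_scope.
Local Open Scope ring_scope.

Definition sum_Z_to (R : realType) (f : int -> R) (l : R) : Prop :=
  exists u v : R,
    [/\ (\sum_(0 <= j < N) f (j%:Z)) @[N --> \oo] --> u,
        (\sum_(1 <= j < N.+1) f (- (j%:Z))) @[N --> \oo] --> v
      & l = u + v].

Definition sym_sum (R : realType) (f : int -> R) (r : nat) : R :=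
  \sum_(0 <= i < (r.*2).+1) f (i%:Z - r%:Z).

From HB Require Import structures.
From mathcomp Require Import all_boot all_order all_algebra.
From mathcomp Require Import all_classical all_reals topology normedtype sequences.
From mathcomp Require Import lra ring zify.
Import Order.TTheory GRing.Theory Num.Theory.
Import numFieldNormedType.Exports.
Local Open Scope classical_set_scope.
Local Open Scope ring_scope.

(* Write b_j - abar = D_(j+1) - D_j with D_k := sum_(j<k) (b_j - abar); the
   Cesaro hypothesis says D_k = o(k), i.e. |D_k| <= K_d + d k for every d > 0.
   Summation by parts against a nonnegative nonincreasing summable weight q gives
   |sum_j q_j (b_j - abar)| <= 2 K_d q_0 + d sum_j q_j.  Applied on both half-lines
   to the unimodal p^(n), whose weights at the mode satisfy
   p_0 + p_(-1) <= E_n(1_[-1,1]) -> 0, this yields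
   |E_n(a) - abar| <= 2 K_d E_n(1_[-1,1]) + d. *)

Lemma abel_summation {R : comPzRingType} (q c : nat -> R) N :
  \sum_(0 <= j < N) q j * (c j.+1 - c j) =
  \sum_(0 <= j < N) (q j - q j.+1) * c j.+1 + q N * c N - q 0%N * c 0%N.
Proof.
elim: N => [|N IH]; first by rewrite !big_geq // add0r subrr.
by rewrite !big_nat_recr //= IH; ring.
Qed.

Lemma abel_sum_bound {R : realDomainType} (q c : nat -> R) K d N : 0 <= d ->
  (forall j, 0 <= q j) -> (forall j, q j.+1 <= q j) ->
  (forall k, `|c k| <= K + d * k%:R) ->
  `|\sum_(0 <= j < N) q j * (c j.+1 - c j)| <=
     2 * K * q 0%N + d * \sum_(0 <= j < N) q j.
Proof.
move=> d_ge0 q_ge0 q_noninc c_le.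
pose c' k := K + d * k%:R.
have abel_c' := abel_summation q c' N.
have -> : d * \sum_(0 <= j < N) q j = \sum_(0 <= j < N) q j * (c' j.+1 - c' j).
  by rewrite mulr_sumr; apply: eq_bigr => j _; rewrite /c' -natr1; ring.
rewrite abel_summation abel_c' /c' mulr0 addr0.
have le_main : `|\sum_(0 <= j < N) (q j - q j.+1) * c j.+1| <=
               \sum_(0 <= j < N) (q j - q j.+1) * c' j.+1.
  apply: le_trans (ler_norm_sum _ _ _) _; apply: ler_sum => j _.
  by rewrite normrM ger0_norm ?subr_ge0 // ler_wpM2l ?subr_ge0.
have le_last : `|q N * c N| <= q N * c' N by rewrite normrM ger0_norm ?ler_wpM2l.
have le_first : `|q 0%N * c 0%N| <= q 0%N * K.
  by rewrite normrM ger0_norm // ler_wpM2l // -[K]addr0 -[X in _ + X](mulr0 d).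
apply: le_trans (ler_normB _ _) _; apply: le_trans (lerD (ler_normD _ _) le_first) _.
by rewrite /c' in le_main le_last; lra.
Qed.

Section CesaroWeightedSums.
Context {R : realType} {b : nat -> R} {abar : R}.
Hypothesis b_cesaro : (k%:R^-1 * \sum_(0 <= j < k) b j) @[k --> \oo] --> abar.

Let dev k := \sum_(0 <= j < k) (b j - abar).

Lemma dev_sublinear d : 0 < d ->
  exists2 K, 0 <= K & forall k, `|dev k| <= K + d * k%:R.
Proof.
move=> d_gt0; pose m k := k%:R^-1 * \sum_(0 <= j < k) b j.
have devE k : dev k = k%:R * (m k - abar).
  have [->|k_gt0] := posnP k; first by rewrite /dev big_geq // mul0r.
  rewrite /dev /m sumrB sumr_const_nat subn0 -mulr_natl; field.
  by rewrite pnatr_eq0 -lt0n.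
have /cvg_seq_bounded/pinfty_ex_gt0[M M_gt0 mM] : cvgn (fun k => m k - abar).
  by apply/cvg_ex; exists (abar - abar); apply: cvgB => //; exact: cvg_cst.
move/cvgrPdist_le: b_cesaro => /(_ d d_gt0) [r _ m_near].
have rM_ge0 : 0 <= r%:R * M by rewrite mulr_ge0 ?ler0n ?ltW.
exists (r%:R * M) => // k; rewrite devE normrM normr_nat.
have dk_ge0 : 0 <= d * k%:R by rewrite mulr_ge0 ?ler0n ?ltW.
have [k_lt_r|r_le_k] := ltnP k r.
- have : k%:R * `|m k - abar| <= r%:R * M.
    apply: le_trans (ler_wpM2l (ler0n _ k) (mM k I)) _.
    by rewrite ler_wpM2r ?(ltW M_gt0) // ler_nat ltnW.
  lra.
- have : k%:R * `|m k - abar| <= d * k%:R.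
    by rewrite mulrC ler_wpM2r // distrC m_near.
  lra.
Qed.

Lemma dev_succ k : b k - abar = dev k.+1 - dev k.
Proof. by rewrite /dev big_nat_recr //= addrC addrK. Qed.

Section DecreasingWeights.
Variables (q : nat -> R) (u : R).
Hypothesis q_ge0 : forall j, 0 <= q j.
Hypothesis q_noninc : forall j, q j.+1 <= q j.
Hypothesis q_sum : (\sum_(0 <= j < N) q j) @[N --> \oo] --> u.

Lemma partial_sum_le_series N : \sum_(0 <= j < N) q j <= u.
Proof.
rewrite -(cvg_lim _ q_sum) //; apply: nondecreasing_cvgn_le; last first.
  by apply/cvg_ex; exists u.
by apply: nondecreasing_series => j _ _.
Qed.

Lemma series_ge0 : 0 <= u.
Proof. by apply: le_trans (partial_sum_le_series 0); rewrite big_geq. Qed.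

Lemma mul_index_le_series N : N%:R * q N <= u.
Proof.
apply: le_trans (partial_sum_le_series N).
have -> : N%:R * q N = \sum_(0 <= j < N) q N by rewrite sumr_const_nat subn0 mulr_natl.
apply: ler_sum_nat => j /andP[_ jN].
by apply: (nonincreasing_seqP _).1 q_noninc _ _ (ltnW jN).
Qed.

Lemma range_sum_le_series N0 N : \sum_(N0 <= j < N) q j <= u.
Proof.
have [N_lt_N0|N0_le_N] := ltnP N N0; first by rewrite big_geq ?series_ge0 // ltnW.
apply: le_trans (partial_sum_le_series N).
rewrite [leRHS](@big_cat_nat _ _ _ N0) //= -[leLHS]add0r lerD2r.
by apply: sumr_ge0 => j _.
Qed.

Lemma weighted_dev_range_bound K d N0 N : 0 <= d ->
  (forall k, `|dev k| <= K + d * k%:R) ->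
  `|\sum_(N0 <= j < N) q j * (b j - abar)| <= 2 * (K + d * N0%:R) * q N0 + d * u.
Proof.
move=> d_ge0 dev_le.
rewrite -{1}[N0]add0n big_addn.
under eq_bigr => j _ do rewrite dev_succ -addSn.
apply: le_trans (abel_sum_bound (fun j => q (j + N0)%N) (fun k => dev (k + N0)%N)
  (K + d * N0%:R) d (N - N0)%N d_ge0 _ _ _) _ => //.
- by move=> j; rewrite addSn.
- by move=> k; apply: le_trans (dev_le _) _; rewrite natrD; lra.
rewrite add0n lerD2l ler_wpM2l //.
by move: (range_sum_le_series N0 N); rewrite -{1}[N0]add0n big_addn.
Qed.

Lemma weighted_dev_cvg : cvgn (fun N => \sum_(0 <= j < N) q j * (b j - abar)).
Proof.
apply: cauchy_cvg; apply: cauchy_exP => e e_gt0.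
have u_ge0 := series_ge0.
(* The range bound 2 K q_N0 + 2 d (N0 q_N0) + d u is below e once d u < e / 4,
   (K + 1) q_N0 <= e / 8, and N0 q_N0 <= u. *)
pose d := e / (4 * (u + 1)).
have d_gt0 : 0 < d by rewrite divr_gt0 // mulr_gt0 // ltr_wpDl.
have du_lt : d * u < e / 4.
  rewrite /d mulrAC ltr_pdivrMr ?mulr_gt0 ?ltr_wpDl //.
  have -> : e / 4 * (4 * (u + 1)) = e * u + e by field.
  by rewrite ltrDl.
have [K K_ge0 dev_le] := dev_sublinear _ d_gt0.
have q_cvg0 : q N @[N --> \oo] --> 0.
  by apply: cvg_series_cvg_0; apply/cvg_ex; exists u.
have K1_gt0 : 0 < K + 1 by rewrite ltr_wpDl.
have e8_gt0 : 0 < e / (8 * (K + 1)) by rewrite divr_gt0 // mulr_gt0.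
move/cvgrPdist_le: q_cvg0 => /(_ _ e8_gt0) [N0 _ q_small].
have KqN0 : (K + 1) * q N0 <= e / 8.
  have -> : e / 8 = (K + 1) * (e / (8 * (K + 1))) by field; rewrite lt0r_neq0.
  rewrite ler_wpM2l ?(ltW K1_gt0) //.
  by have := q_small N0 (leqnn _); rewrite sub0r normrN ger0_norm.
exists (\sum_(0 <= j < N0) q j * (b j - abar)), N0 => // N /= N0_le_N.
rewrite -ball_normE /= [X in _ - X](@big_cat_nat _ _ _ N0) //= opprD addNKr normrN.
have := weighted_dev_range_bound _ _ N0 N (ltW d_gt0) dev_le.
have : d * (N0%:R * q N0) <= d * u by rewrite ler_wpM2l ?(ltW d_gt0) ?mul_index_le_series.
have := q_ge0 N0; lra.
Qed.

End DecreasingWeights.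

Lemma weighted_series_bound d : 0 < d ->
  exists2 K, 0 <= K & forall (q : nat -> R) (u : R), (forall j, 0 <= q j) ->
    (forall j, q j.+1 <= q j) -> (\sum_(0 <= j < N) q j) @[N --> \oo] --> u ->
    exists2 T, (\sum_(0 <= j < N) q j * b j) @[N --> \oo] --> T &
      `|T - abar * u| <= 2 * K * q 0%N + d * u.
Proof.
move=> d_gt0; have [K K_ge0 dev_le] := dev_sublinear _ d_gt0.
exists K => // q u q_ge0 q_noninc q_sum.
have /cvg_ex[D D_lim] := weighted_dev_cvg _ _ q_ge0 q_noninc q_sum.
exists (D + abar * u).
  have -> : (fun N => \sum_(0 <= j < N) q j * b j) =
      (fun N => \sum_(0 <= j < N) q j * (b j - abar) + abar * \sum_(0 <= j < N) q j).
    apply: boolp.funext => N; rewrite mulr_sumr -big_split /=.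
    by apply: eq_bigr => j _; ring.
  by apply: cvgD => //; exact: cvgMl_tmp.
rewrite addrK; apply: cvgr_to_le (cvg_norm D_lim) _; near=> N.
by have := weighted_dev_range_bound _ _ q_ge0 q_noninc q_sum _ _ 0 N (ltW d_gt0) dev_le;
  rewrite mulr0 addr0.
Unshelve. all: by end_near.
Qed.

End CesaroWeightedSums.

Definition nonneg_half {T : Type} (f : int -> T) (j : nat) : T := f j%:Z.
Definition neg_half {T : Type} (f : int -> T) (j : nat) : T := f (- (j.+1)%:Z).

Lemma sum_neg_halfE {V : nmodType} (f : int -> V) k :
  \sum_(1 <= j < k.+1) f (- (j%:Z)) = \sum_(0 <= j < k) neg_half f j.
Proof. exact: big_add1. Qed.

Lemma sum_Z_toE (R : realType) (f : int -> R) l : sum_Z_to f l <->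
  exists u v, [/\ (\sum_(0 <= j < N) nonneg_half f j) @[N --> \oo] --> u,
                  (\sum_(0 <= j < N) neg_half f j) @[N --> \oo] --> v & l = u + v].
Proof.
have sumE : (fun N => \sum_(1 <= j < N.+1) f (- (j%:Z))) =
    (fun N => \sum_(0 <= j < N) neg_half f j).
  by apply: boolp.funext => N; exact: sum_neg_halfE.
by rewrite /sum_Z_to sumE.
Qed.

Lemma sum_Z_to_unique {R : realType} {f : int -> R} {l l' : R} :
  sum_Z_to f l -> sum_Z_to f l' -> l = l'.
Proof.
move=> [u [v [hu hv ->]]] [u' [v' [hu' hv' ->]]].
by rewrite (cvg_unique _ hu hu') // (cvg_unique _ hv hv').
Qed.

Lemma sym_sum1 (R : realType) (f : int -> R) : sym_sum f 1 = f (-1) + f 0 + f 1.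
Proof. by rewrite /sym_sum !big_nat_recr //= big_geq // add0r. Qed.

Section TwoSidedCesaro.
Context {R : realType} {a : int -> R} {abar : R}.
Hypothesis a_cesaro_pos : (k%:R^-1 * \sum_(0 <= j < k) a (j%:Z)) @[k --> \oo] --> abar.
Hypothesis a_cesaro_neg :
  (k%:R^-1 * \sum_(1 <= j < k.+1) a (- (j%:Z))) @[k --> \oo] --> abar.

Lemma unimodal_weighted_sum_Z_bound d : 0 < d ->
  exists2 K, 0 <= K & forall (f : int -> R) (s : R), (forall j, 0 <= f j) ->
    (forall i j : int, i <= j -> j < 0 -> f i <= f j) ->
    (forall i j : int, 0 <= i -> i <= j -> f j <= f i) ->
    sum_Z_to f s ->
    exists2 E, sum_Z_to (fun j => f j * a j) E &
      `|E - abar * s| <= 2 * K * (f 0 + f (-1)) + d * s.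
Proof.
move=> d_gt0.
have neg_cesaro : (k%:R^-1 * \sum_(0 <= j < k) neg_half a j) @[k --> \oo] --> abar.
  by under eq_fun do rewrite -sum_neg_halfE.
have [Kp Kp_ge0 pos_bound] := weighted_series_bound a_cesaro_pos _ d_gt0.
have [Km Km_ge0 neg_bound] := weighted_series_bound neg_cesaro _ d_gt0.
exists (Kp + Km); first exact: addr_ge0.
move=> f s f_ge0 f_inc f_dec /sum_Z_toE[u [v [u_lim v_lim ->]]].
have pos_noninc j : nonneg_half f j.+1 <= nonneg_half f j by apply: f_dec; lia.
have neg_noninc j : neg_half f j.+1 <= neg_half f j by apply: f_inc; lia.
have [Tp Tp_lim Tp_bound] := pos_bound _ _ (fun j => f_ge0 _) pos_noninc u_lim.
have [Tm Tm_lim Tm_bound] := neg_bound _ _ (fun j => f_ge0 _) neg_noninc v_lim.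
exists (Tp + Tm); first by apply/sum_Z_toE; exists Tp, Tm.
have -> : Tp + Tm - abar * (u + v) = (Tp - abar * u) + (Tm - abar * v) by ring.
apply: le_trans (ler_normD _ _) _.
have := mulr_ge0 Kp_ge0 (f_ge0 (-1)); have := mulr_ge0 Km_ge0 (f_ge0 0).
rewrite /nonneg_half /neg_half in Tp_bound Tm_bound; lra.
Qed.
End TwoSidedCesaro.

Theorem lemmaA5 (R : realType) (a : int -> R) (abar : R) (p : nat -> int -> R)
  (ha_pos : (k%:R^-1 * \sum_(0 <= j < k) a (j%:Z)) @[k --> \oo] --> abar)
  (ha_neg : (k%:R^-1 * \sum_(1 <= j < k.+1) a (- (j%:Z))) @[k --> \oo] --> abar)
  (hp_nonneg : forall n j, 0 <= p n j)
  (hp_prob : forall n, sum_Z_to (p n) 1)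
  (hp_inc : forall n (i j : int), i <= j -> j < 0 -> p n i <= p n j)
  (hp_dec : forall n (i j : int), 0 <= i -> i <= j -> p n j <= p n i)
  (hp_loc : forall r : nat, (sym_sum (p n) r) @[n --> \oo] --> 0) :
  exists E : nat -> R,
    (forall n, sum_Z_to (fun j => p n j * a j) (E n)) /\ E n @[n --> \oo] --> abar.
Proof.
have bound d := unimodal_weighted_sum_Z_bound ha_pos ha_neg d.
have /boolp.choice[E pa_sum] n : exists E, sum_Z_to (fun j => p n j * a j) E.
  have [K _ /(_ _ _ (hp_nonneg n) (hp_inc n) (hp_dec n) (hp_prob n))[E ? _]] := bound _ ltr01.
  by exists E.
exists E; split => //; apply/cvgrPdist_le => e e_gt0.
have e2_gt0 : 0 < e / 2 by rewrite divr_gt0.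
have [K K_ge0 E_bound] := bound _ e2_gt0.
have : (2 * K * sym_sum (p n) 1) @[n --> \oo] --> 0.
  by rewrite -(mulr0 (2 * K)); exact: cvgMl_tmp.
move/cvgrPdist_le => /(_ _ e2_gt0) [N _ center_small].
exists N => // n /center_small; rewrite sub0r normrN => small.
have [E' pa_sum' E'_bound] :=
  E_bound _ _ (hp_nonneg n) (hp_inc n) (hp_dec n) (hp_prob n).
rewrite (sum_Z_to_unique (pa_sum n) pa_sum') distrC mulr1 in E'_bound *.
have : 2 * K * (p n 0 + p n (-1)) <= 2 * K * sym_sum (p n) 1.
  by rewrite ler_wpM2l ?mulr_ge0 // sym_sum1 addrC lerDl hp_nonneg.
have := ler_norm (2 * K * sym_sum (p n) 1); lra.
Qed.
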